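(* Let $f:X\to Y$ be a definable function in a saturated model $\mathcal U$. Then $f$ is always almost saturated if and only if for all global types $p,q\in S_X(\mathcal U)$, if $f_*(p)=f_*(q)$ and this type is not realized, then $p=q$.
   Context: For a definable $Z\subseteq X$, $Z$ is almost saturated with respect to $f$ if $f(Z)\cap f(X\setminus Z)$ is finite; $f$ is always almost saturated if every definable subset of $X$ is almost saturated with respect to $f$. $S_X(\mathcal U)$ is the space of complete types over $\mathcal U$ concentrating on $X$, and $f_*(p)$ is the pushforward type $\{D: f^{-1}(D)\in p\}$. *)

From HB Require Import structures.
From mathcomp Require Import all_boot all_order.
From mathcomp Require Import boolp classical_sets functions cardinality.

Set Implicit Arguments.
Unset Strict Implicit.
Unset Printing Implicit Defensive.

Local Open Scope classical_set_scope.
Local Open Scope card_scope.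

Definition tcat (U : Type) (n k : nat) (x : 'I_n -> U) (b : 'I_k -> U)
  : 'I_(n + k) -> U :=
  fun i => match fintype.split i with inl j => x j | inr j => b j end.

(* A first-order structure with universe U, presented (Tarski-style) by its
   collections Def0 n of 0-definable (parameter-free definable) subsets of U^n.
   These are exactly the sets definable by L-formulas without parameters in
   some first-order language L (Morleyization). *)
Unset Implicit Arguments.
Record structure (U : Type) := Structure {
  Def0 : forall n : nat, set (set ('I_n -> U));
  Def0_setT : forall n : nat, Def0 n (@setT ('I_n -> U));
  Def0_setC : forall (n : nat) (D : set ('I_n -> U)), Def0 n D -> Def0 n (~` D);
  Def0_setI : forall (n : nat) (D E : set ('I_n -> U)),
      Def0 n D -> Def0 n E -> Def0 n (D `&` E);
  Def0_diag : forall (n : nat) (i j : 'I_n), Def0 n [set x | x i = x j];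
  Def0_reindex : forall (m n : nat) (s : 'I_m -> 'I_n) (D : set ('I_m -> U)),
      Def0 m D -> Def0 n [set x : 'I_n -> U | D (fun i => x (s i))];
  Def0_proj : forall (n k : nat) (D : set ('I_(n + k) -> U)),
      Def0 (n + k) D -> Def0 n [set x | exists b, D (tcat x b)]
}.
Set Implicit Arguments.

Section Defs.
Variables (U : Type) (M : structure U).

Definition ADef (A : set U) (n : nat) (S : set ('I_n -> U)) : Prop :=
  exists k (D : set ('I_(n + k) -> U)) (b : 'I_k -> U),
    @Def0 U M (n + k) D /\ (forall i, A (b i)) /\ S = [set x | D (tcat x b)].

Definition Definable (n : nat) (S : set ('I_n -> U)) : Prop := ADef setT S.

(* Saturated: for every A subset of U with |A| < |U|, every collection of
   A-definable subsets of U^n with the finite intersection property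
   (i.e. every partial n-type over A) is realized in U. *)
Definition saturated : Prop :=
  forall A : set U, ~ ([set: U] #<= A) ->
  forall (n : nat) (F : set (set ('I_n -> U))),
    (forall S, F S -> ADef A S) ->
    (forall s : seq (set ('I_n -> U)), (forall S, S \in s -> F S) ->
        exists x, forall S, S \in s -> S x) ->
    exists x, forall S, F S -> S x.

(* A global type in n variables: an ultrafilter of the Boolean algebra of
   U-definable subsets of U^n (a complete type over U). *)
Definition global_type (n : nat) (p : set (set ('I_n -> U))) : Prop :=
  [/\ forall S, p S -> Definable S,
      ~ p set0,
      forall S T, p S -> p T -> p (S `&` T),
      forall S T, p S -> Definable T -> S `<=` T -> p T &
      forall S, Definable S -> p S \/ p (~` S)].

Definition type_on (n : nat) (X : set ('I_n -> U)) (p : set (set ('I_n -> U)))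
  : Prop := global_type p /\ p X.

Definition definable_fun (n m : nat) (X : set ('I_n -> U)) (Y : set ('I_m -> U))
  (f : ('I_n -> U) -> ('I_m -> U)) : Prop :=
  Definable X /\ Definable Y /\ (forall x, X x -> Y (f x)) /\
  Definable [set z : 'I_(n + m) -> U |
               exists x, X x /\ z = tcat x (f x)].

Definition pushforward (n m : nat) (X : set ('I_n -> U))
  (f : ('I_n -> U) -> ('I_m -> U)) (p : set (set ('I_n -> U)))
  : set (set ('I_m -> U)) :=
  [set D | Definable D /\ p (X `&` f @^-1` D)].

Definition realized (m : nat) (q : set (set ('I_m -> U))) : Prop :=
  exists b : 'I_m -> U, q = [set D | Definable D /\ D b].

Definition almost_saturated (n m : nat) (X : set ('I_n -> U))
  (f : ('I_n -> U) -> ('I_m -> U)) (Z : set ('I_n -> U)) : Prop :=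
  finite_set ((f @` Z) `&` (f @` (X `\` Z))).

Definition always_almost_saturated (n m : nat) (X : set ('I_n -> U))
  (f : ('I_n -> U) -> ('I_m -> U)) : Prop :=
  forall Z, Definable Z -> Z `<=` X -> almost_saturated X f Z.

End Defs.

(* If f is always almost saturated and p, q have the same unrealized pushforward r
   while S is in p and its complement in q, then for Z := X ∩ S the set
   f(Z) ∩ f(X \ Z) is finite, so some D in r avoids it.  But f(Z) ∩ D is in r,
   hence its preimage meets X \ S in a point of q, whose image lies in D and in
   f(Z) ∩ f(X \ Z).  Conversely, if f(Z) ∩ f(X \ Z) is infinite, a nonprincipal
   ultrafilter on it traces an unrealized global type r, and r lifts along f both
   to a type containing Z and to a type containing X \ Z. *)

From Pilot Require Import Defs.
From mathcomp Require Import all_boot all_order.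
From mathcomp Require Import boolp classical_sets functions cardinality filter.
Local Open Scope classical_set_scope.
Set Implicit Arguments. Unset Strict Implicit. Unset Printing Implicit Defensive.

#[local] Arguments Def0 {U} s0 n.
#[local] Arguments Def0_setT {U} s0 n.
#[local] Arguments Def0_setC {U s0 n D}.
#[local] Arguments Def0_setI {U s0 n D E}.
#[local] Arguments Def0_diag {U} s0 {n}.
#[local] Arguments Def0_reindex {U s0 m n} s {D}.
#[local] Arguments Def0_proj {U s0 n k D}.

Section Tcat.
Variables (V : Type) (n k : nat).

Lemma tcat_lshift (x : 'I_n -> V) (b : 'I_k -> V) j : tcat x b (lshift k j) = x j.
Proof. by rewrite /tcat (unsplitK (inl j)). Qed.

Lemma tcat_rshift (x : 'I_n -> V) (b : 'I_k -> V) j : tcat x b (rshift n j) = b j.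
Proof. by rewrite /tcat (unsplitK (inr j)). Qed.

Lemma tcatKl (x : 'I_n -> V) (b : 'I_k -> V) : tcat x b \o lshift k = x.
Proof. by apply/funext => j; rewrite /= tcat_lshift. Qed.

Lemma tcatKr (x : 'I_n -> V) (b : 'I_k -> V) : tcat x b \o @rshift n k = b.
Proof. by apply/funext => j; rewrite /= tcat_rshift. Qed.

Lemma tcat_comp W (z : V -> W) (g : 'I_n -> V) (h : 'I_k -> V) :
  z \o tcat g h = tcat (z \o g) (z \o h).
Proof. by apply/funext => i; rewrite /= /tcat; case: (fintype.split i). Qed.

Lemma tcat_inj (x x' : 'I_n -> V) (b b' : 'I_k -> V) :
  tcat x b = tcat x' b' -> x = x' /\ b = b'.
Proof.
by move=> e; split; [rewrite -(tcatKl x b) e tcatKl | rewrite -(tcatKr x b) e tcatKr].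
Qed.

End Tcat.

Section Def0Closure.
Variables (U : Type) (N : structure U).
Local Notation Def0 := (Def0 N).

Lemma Def0_reindex_comp m n (s : 'I_m -> 'I_n) (D : set ('I_m -> U)) :
  Def0 m D -> Def0 n [set x : 'I_n -> U | D (x \o s)].
Proof. exact: Def0_reindex. Qed.

Lemma Def0_preimage n m (G : set ('I_(n + m) -> U)) (D : set ('I_m -> U)) :
  Def0 (n + m) G -> Def0 m D -> Def0 n [set x | exists y, G (tcat x y) /\ D y].
Proof.
move=> hG hD; have := Def0_proj (Def0_setI hG (Def0_reindex_comp (@rshift n m) hD)).
by congr (Def0 n); apply/funext => x /=; under eq_exists => y do rewrite tcatKr.
Qed.

Lemma Def0_image n m (G : set ('I_(n + m) -> U)) (Z : set ('I_n -> U)) :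
  Def0 (n + m) G -> Def0 n Z -> Def0 m [set y | exists x, G (tcat x y) /\ Z x].
Proof.
move=> hG hZ.
have hGswap := Def0_reindex_comp (tcat (@rshift m n) (@lshift m n)) hG.
have := Def0_proj (Def0_setI hGswap (Def0_reindex_comp (@rshift m n) hZ)).
congr (Def0 m); apply/funext => y /=.
by under eq_exists => x do rewrite tcat_comp tcatKl tcatKr.
Qed.

Lemma Def0_tuple_eq m :
  Def0 (m + m) [set z | forall i : 'I_m, z (lshift m i) = z (rshift m i)].
Proof.
suff: forall s : seq 'I_m,
    Def0 (m + m) [set z | forall i, i \in s -> z (lshift m i) = z (rshift m i)].
  by move=> /(_ (enum 'I_m)); congr (Def0 _); apply/funext => z;
     apply/propext; split=> h i //; apply: h; rewrite mem_enum.
elim=> [|a s IH].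
  by congr (Def0 _): (Def0_setT N (m + m)); apply/funext => z; apply/propext.
congr (Def0 _): (Def0_setI (Def0_diag N (lshift m a) (rshift m a)) IH).
apply/funext => z; apply/propext; split=> [[za zs] i|h].
  by rewrite in_cons => /predU1P[->|]; [|apply: zs].
by split=> [|i si]; apply: h; rewrite in_cons ?eqxx ?si ?orbT.
Qed.

End Def0Closure.

Section DefinableStructure.
Variables (U : Type) (M : structure U).
Local Notation Definable := (@Definable U M).

Lemma Definable_param n k (D : set ('I_(n + k) -> U)) (b : 'I_k -> U) :
  Def0 M (n + k) D -> Definable [set x | D (tcat x b)].
Proof. by move=> hD; exists k, D, b. Qed.

Lemma Def0_Definable n (D : set ('I_n -> U)) : Def0 M n D -> Definable D.
Proof.
move=> hD; have := Definable_param (tnth [tuple]) (Def0_reindex_comp (@lshift n 0) hD).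
by congr Definable; apply/funext => x /=; rewrite tcatKl.
Qed.

Lemma Definable_setT n : Definable [set: 'I_n -> U].
Proof. exact/Def0_Definable/Def0_setT. Qed.

Lemma Definable_setC n (D : set ('I_n -> U)) : Definable D -> Definable (~` D).
Proof. by move=> [k [E [b [hE [_ ->]]]]]; apply: Definable_param (Def0_setC hE). Qed.

Lemma Definable_setI n (D E : set ('I_n -> U)) :
  Definable D -> Definable E -> Definable (D `&` E).
Proof.
move=> [k1 [D' [b1 [hD [_ ->]]]]] [k2 [E' [b2 [hE [_ ->]]]]].
(* Both sets are rewritten over the merged parameter tuple tcat b1 b2. *)
have hD12 := Def0_reindex_comp
  (tcat (@lshift n (k1 + k2)) (@rshift n (k1 + k2) \o @lshift k1 k2)) hD.
have hE12 := Def0_reindex_comp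
  (tcat (@lshift n (k1 + k2)) (@rshift n (k1 + k2) \o @rshift k1 k2)) hE.
have := Definable_param (tcat b1 b2) (Def0_setI hD12 hE12).
by congr Definable; apply/funext => x /=; rewrite !tcat_comp !compA !tcatKr !tcatKl.
Qed.

Lemma Definable_diag n (i j : 'I_n) : Definable [set x | x i = x j].
Proof. exact/Def0_Definable/Def0_diag. Qed.

Lemma Definable_reindex m n (s : 'I_m -> 'I_n) (D : set ('I_m -> U)) :
  Definable D -> Definable [set x : 'I_n -> U | D (fun i => x (s i))].
Proof.
move=> [k [E [b [hE [_ ->]]]]].
have := Definable_param b (Def0_reindex_comp (tcat (@lshift n k \o s) (@rshift n k)) hE).
by congr Definable; apply/funext => x /=; rewrite tcat_comp compA tcatKl tcatKr.
Qed.

Lemma Definable_proj n k (D : set ('I_(n + k) -> U)) :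
  Definable D -> Definable [set x | exists c, D (tcat x c)].
Proof.
move=> [l [E [b [hE [_ ->]]]]].
(* Move the projected block c past the parameter block b. *)
have hEswap := Def0_reindex_comp (tcat (tcat (@lshift (n + l) k \o @lshift n l)
  (@rshift (n + l) k)) (@lshift (n + l) k \o @rshift n l)) hE.
have := Definable_param b (Def0_proj hEswap).
congr Definable; apply/funext => x /=.
by under eq_exists => c do rewrite !tcat_comp !compA !tcatKl !tcatKr.
Qed.

Definition definable_structure : structure U :=
  @Structure U (fun n => @Defs.Definable U M n) Definable_setT Definable_setC
    Definable_setI Definable_diag Definable_reindex Definable_proj.

Lemma Definable_set1 n (b : 'I_n -> U) : Definable [set b].
Proof.
have := Definable_param b (Def0_tuple_eq M n).
congr Definable; apply/funext => x /=; apply/propext.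
split=> [e|-> i]; last by rewrite tcat_lshift tcat_rshift.
by apply/funext => i; have := e i; rewrite tcat_lshift tcat_rshift.
Qed.

End DefinableStructure.

Lemma exists_avoid_finite T (P : set (set T)) (F : set T) :
  finite_set F -> P setT -> setI_closed P ->
  (forall y, F y -> exists2 D, P D & ~ D y) -> exists2 D, P D & F `<=` ~` D.
Proof.
elim/Peq: T => T in P F *; move=> /finite_seqP[s ->] PT PI.
elim: s => [|a s IH] avoid; first by exists setT.
have [Da PDa Da_a] := avoid a (mem_head a s).
have [|Ds PDs sDs] := IH; first by move=> y sy; apply: avoid; rewrite /= in_cons sy orbT.
exists (Da `&` Ds); first exact: PI.
by move=> y /=; rewrite in_cons => /predU1P[-> []|/sDs nDs []].
Qed.

Section GlobalTypes.
Variables (U : Type) (M : structure U) (n : nat).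
Implicit Types (p : set (set ('I_n -> U))) (S : set ('I_n -> U)).

Lemma global_type_nonempty p S : global_type M p -> p S -> S !=set0.
Proof. by move=> [_ p0 _ _ _] pS; apply/set0P; apply: contra_notN p0 => /eqP <-. Qed.

Lemma global_type_setT p : global_type M p -> p setT.
Proof.
by move=> [_ p0 _ _ pU]; case: (pU _ (Definable_setT M n)); rewrite ?setCT.
Qed.

Lemma ultrafilter_global_type (G : set (set ('I_n -> U))) :
  UltraFilter G -> global_type M [set S | Definable M S /\ G S].
Proof.
move=> UG; split.
- by move=> S [].
- by move=> [_]; apply: filter_not_empty.
- by move=> S T [dS GS] [dT GT]; split; [exact: Definable_setI | exact: filterI].
- by move=> S T [_ GS] dT ST; split => //; apply: filterS GS.
- move=> S dS; case: (in_ultra_setVsetC S UG); first by left.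
  by right; split => //; apply: Definable_setC.
Qed.

Lemma not_realized_avoid p (F : set ('I_n -> U)) :
  global_type M p -> ~ realized M p -> finite_set F -> exists2 D, p D & F `<=` ~` D.
Proof.
move=> tp nrp finF; have [pdef _ pI _ pU] := tp.
apply: exists_avoid_finite => // [|y _]; first exact: global_type_setT.
apply: contrapT => py; apply: nrp; exists y; apply/funext => D; apply/propext.
split=> [pD|[dD Dy]].
  by split; [exact: pdef | apply: contrapT => nDy; apply: py; exists D].
by case: (pU D dD) => // pnD; exfalso; apply: py; exists (~` D).
Qed.

End GlobalTypes.

Section Pushforward.
Variables (U : Type) (M : structure U) (n m : nat) (X : set ('I_n -> U))
  (Y : set ('I_m -> U)) (f : ('I_n -> U) -> ('I_m -> U)).
Hypothesis (hf : definable_fun M X Y f).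
Local Notation Definable := (@Definable U M _).
Local Notation pushforward := (pushforward M X f).

Let graph := [set z : 'I_(n + m) -> U | exists x, X x /\ z = tcat x (f x)].

Let graphP x y : graph (tcat x y) <-> X x /\ y = f x.
Proof. by split=> [[x' [Xx' /tcat_inj[-> ->]]] | [Xx ->]]; last exists x. Qed.

Lemma Definable_preimage (D : set ('I_m -> U)) :
  Definable D -> Definable (X `&` f @^-1` D).
Proof.
have [_ [_ [_ dgraph]]] := hf; move=> dD.
have := @Def0_preimage _ (definable_structure M) _ _ _ _ dgraph dD.
congr Definable; apply/funext => x /=; apply/propext.
by split=> [[y [/graphP[Xx ->]]]|[Xx Dfx]]; last by exists (f x); split => //; apply/graphP.
Qed.

Lemma Definable_image (Z : set ('I_n -> U)) :
  Definable Z -> Z `<=` X -> Definable (f @` Z).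
Proof.
have [_ [_ [_ dgraph]]] := hf; move=> dZ ZX.
have := @Def0_image _ (definable_structure M) _ _ _ _ dgraph dZ.
congr Definable; apply/funext => y /=; apply/propext.
split=> [[x [/graphP[_ ->] Zx]]|[x Zx <-]]; first by exists x.
by exists x; split => //; apply/graphP; split => //; apply: ZX.
Qed.

Lemma pushforward_global_type (p : set (set ('I_n -> U))) :
  type_on M X p -> global_type M (pushforward p).
Proof.
move=> [[_ p0 pI pS pU] pX]; split.
- by move=> D [].
- by move=> [_]; rewrite preimage_set0 setI0.
- move=> D E [dD pD] [dE pE]; split; first exact: Definable_setI.
  by rewrite preimage_setI setIIr; apply: pI.
- move=> D E [dD pD] dE DE; split => //.
  by apply: pS pD (Definable_preimage dE) _; apply: setIS; apply: preimage_subset.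
- move=> D dD; case: (pU _ (Definable_preimage dD)) => pnD; [by left | right].
  split; first exact: Definable_setC.
  apply: pS (pI _ _ pX pnD) (Definable_preimage (Definable_setC dD)) _.
  by move=> x [Xx nD]; split => // Dfx; apply: nD.
Qed.

Lemma exists_type_on_pushforward (Z : set ('I_n -> U)) (r : set (set ('I_m -> U))) :
  Definable Z -> Z `<=` X -> global_type M r ->
  (forall D, r D -> D `&` f @` Z !=set0) ->
  exists p, [/\ type_on M X p, p Z & pushforward p = r].
Proof.
move=> dZ ZX tr meetZ; have [rdef _ rI _ rU] := tr.
pose F := filter_from r (fun D => Z `&` f @^-1` D).
have FF : ProperFilter F.
  apply: filter_from_proper; last first.
    by move=> D /meetZ[y [Dy [x Zx fxy]]]; exists x; split; rewrite //= fxy.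
  apply: filter_from_filter; first by exists setT; exact: global_type_setT tr.
  by move=> D E rD rE; exists (D `&` E); [exact: rI | rewrite preimage_setI setIIr].
have [G [UG FG]] := ultraFilterLemma FF.
have GZ : G Z by apply: FG; exists setT; [exact: global_type_setT tr | move=> x []].
have GpushD D : r D -> G (X `&` f @^-1` D).
  by move=> rD; apply: FG; exists D => // x [Zx Dfx]; split => //; apply: ZX.
exists [set S | Definable S /\ G S]; split => //.
- split; first exact: ultrafilter_global_type.
  by split; [case: hf | apply: filterS GZ].
apply/funext => D; apply/propext; split=> [[dD [_ GD]]|rD].
  case: (rU D dD) => // rnD; exfalso; apply: (filter_not_empty G).
  by apply: filterS (filterI (GpushD _ rnD) GD) => x [[_ nDfx] [_ Dfx]].
by split; [exact: rdef | split; [exact: Definable_preimage (rdef _ rD) | exact: GpushD]].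
Qed.

Lemma always_almost_saturated_type_sub (p q : set (set ('I_n -> U))) :
  always_almost_saturated M X f -> type_on M X p -> type_on M X q ->
  pushforward p = pushforward q -> ~ realized M (pushforward p) -> p `<=` q.
Proof.
move=> aas tp tq epq nr S pS; apply: contrapT => nqS.
have [[pdef _ pI pSup _] pX] := tp; have [[_ _ qI _ qU] _] := tq.
have qnS : q (~` S) by case: (qU _ (pdef _ pS)).
pose Z := X `&` S.
have dZ : Definable Z by apply: Definable_setI (pdef _ pS); case: hf.
have [D [dD pD] FD] := not_realized_avoid (pushforward_global_type tp) nr
  (aas Z dZ (@subIsetl _ X S)).
have dE : Definable (f @` Z `&` D) :=
  Definable_setI (Definable_image dZ (@subIsetl _ X S)) dD.
have pE : pushforward p (f @` Z `&` D).
  split => //; apply: pSup (pI _ _ (pI _ _ pX pS) pD) (Definable_preimage dE) _.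
  by move=> x [[Xx Sx] [_ Dfx]]; split => //; split => //; exists x.
rewrite epq in pE; have [_ qE] := pE.
have [x [[Xx [fZ Dfx]] nSx]] := global_type_nonempty tq.1 (qI _ _ qE qnS).
by apply: (FD (f x)) Dfx; split => //; exists x => //; split => // -[].
Qed.

Lemma always_almost_saturated_of_pushforward_inj :
  (forall p q : set (set ('I_n -> U)), type_on M X p -> type_on M X q ->
     pushforward p = pushforward q -> ~ realized M (pushforward p) -> p = q) ->
  always_almost_saturated M X f.
Proof.
move=> pf_inj Z dZ ZX; apply: contrapT => infW.
pose W := f @` Z `&` f @` (X `\` Z).
have FF : ProperFilter (filter_from (@finite_set _) (fun A => W `\` A)).
  apply: filter_from_proper => [|A finA]; last first.
    apply/set0P/eqP; rewrite setD_eq0 => WA.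
    by apply: infW; apply: sub_finite_set WA finA.
  apply: filter_from_filter; first by exists set0; exact: finite_set0.
  by move=> A B finA finB; exists (A `|` B); rewrite ?finite_setU ?setDUr.
have [G [UG FG]] := ultraFilterLemma FF.
have GW : G W by apply: FG; exists set0; rewrite ?setD0 //; exact: finite_set0.
pose r := [set D | Definable D /\ G D].
have tr : global_type M r := ultrafilter_global_type M UG.
have meetW D : r D -> D `&` W !=set0 by move=> [_ GD]; apply: filter_ex (filterI GD GW).
have dXZ : Definable (X `\` Z) by apply: Definable_setI (Definable_setC dZ); case: hf.
have [p [tp pZ pf_p]] : exists p, [/\ type_on M X p, p Z & pushforward p = r].
  by apply: exists_type_on_pushforward => // D /meetW[y [Dy [Zy _]]]; exists y.
have [q [tq qXZ pf_q]] : exists q, [/\ type_on M X q, q (X `\` Z) & pushforward q = r].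
  apply: exists_type_on_pushforward (@subDsetl _ X Z) _ _ => //.
  by move=> D /meetW[y [Dy [_ XZy]]]; exists y.
have r_not_realized : ~ realized M r.
  move=> [b rb]; have : r (~` [set b]).
    split; first exact: Definable_setC (Definable_set1 M b).
    by apply: FG; exists [set b]; [exact: finite_set1 | move=> y [_ nb]].
  by rewrite rb => -[_]; apply.
have epq : p = q by apply: pf_inj; rewrite ?pf_p ?pf_q.
have [[_ _ qI _ _] _] := tq; rewrite epq in pZ.
by have [x [Zx [_ nZx]]] := global_type_nonempty tq.1 (qI _ _ pZ qXZ).
Qed.

End Pushforward.

Theorem lemma2p22 (U : Type) (M : structure U) (Msat : saturated M)
  (n m : nat) (X : set ('I_n -> U)) (Y : set ('I_m -> U))
  (f : ('I_n -> U) -> ('I_m -> U)) (hf : definable_fun M X Y f) :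
  always_almost_saturated M X f <->
  (forall p q : set (set ('I_n -> U)),
     type_on M X p -> type_on M X q ->
     pushforward M X f p = pushforward M X f q ->
     ~ realized M (pushforward M X f p) ->
     p = q).
Proof.
split=> [aas p q tp tq epq nr|]; last exact: always_almost_saturated_of_pushforward_inj hf.
apply/seteqP; split; first exact: (always_almost_saturated_type_sub hf aas tp tq epq nr).
by apply: (always_almost_saturated_type_sub hf aas tq tp (esym epq)); rewrite -epq.
Qed.
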